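(* Let $\mathcal{T}$ be a trim transducer with a single initial state. Then the (possibly infinite) multi-transducer $\bar{\mathcal{W}}(\mathcal{T})$ is separable, i.e. it has a single initial state and any two distinct transitions of $\bar{\mathcal{W}}(\mathcal{T})$ with the same source and the same input letter are transient (there is no run in $\bar{\mathcal{W}}(\mathcal{T})$ from the target of either of them back to their common source).
   Context: $\mathcal{T}=(Q,E,I,F,f)$ is a transducer: finite state set $Q$, initial states $I$, final states $F$, transitions $E\subseteq Q\times\Sigma\times\Gamma^*\times Q$, final output $f:F\to\Gamma^*$; trim means every state lies on a run from an initial to a final state. A multi-transducer is like a transducer except that the final output function maps final states to finite sets of words. Determinisation $\bar{\mathcal{D}}(\mathcal{T})$: its states are the finite subsets $U$ of $Q\times\Gamma^*$. For such $U$ and $\sigma\in\Sigma$, let $R_{U,\sigma}=\{(q,uv) : (p,u)\in U,\ (p,\sigma,v,q)\in E\}$, let $w_{U,\sigma}$ be the longest common prefix of the words $\{w : (q,w)\in R_{U,\sigma}\text{ for some }q\}$ (taken to be $\epsilon$ if this set is empty), and $P_{U,\sigma}=\{(q,w) : (q,w_{U,\sigma}w)\in R_{U,\sigma}\}$. The transitions of $\bar{\mathcal{D}}(\mathcal{T})$ are $(U,\sigma,w_{U,\sigma},P_{U,\sigma})$ for all $U,\sigma$; the initial state is $U_0=I\times\{\epsilon\}$; final states are the $U$ with $U\cap(F\times\Gamma^* )\neq\emptyset$, with final output set $\{wf(q) : q\in F,\ (q,w)\in U\}$. Rank: for a finite $U\subseteq Q\times\Gamma^*$, $n_U$ is the set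 of strongly connected components of $\mathcal{T}$ reachable (in $\mathcal{T}$) from the states $q$ such that $(q,w)\in U$ for some $w$. $\bar{\mathcal{W}}(\mathcal{T})$ is obtained from $\bar{\mathcal{D}}(\mathcal{T})$ as follows: every transition $(U,\sigma,v,U')$ of $\bar{\mathcal{D}}(\mathcal{T})$ with $n_{U'}\subsetneq n_U$ is removed and replaced by the transitions $(U,\sigma,vw,\{(q,\epsilon)\})$ for all $(q,w)\in U'$; other transitions, the initial state, final states and final outputs are unchanged. A transition is transient if there is no run from its target to its source. *)

From mathcomp Require Import all_boot.
From mathcomp Require Import finmap.

Set Implicit Arguments.
Unset Strict Implicit.
Unset Printing Implicit Defensive.

Local Open Scope fset_scope.

Section Transducers.
Variables (Sigma Gamma : finType).

Record transducer (Q : finType) := Transducer {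
  trans : {fset (Q * Sigma * seq Gamma * Q)};
  init  : {set Q};
  final : {set Q};
  fout  : Q -> seq Gamma   (* final output function; only relevant on final *)
}.

Definition tsrc {Q : finType} (t : Q * Sigma * seq Gamma * Q) : Q := t.1.1.1.
Definition tlet {Q : finType} (t : Q * Sigma * seq Gamma * Q) : Sigma := t.1.1.2.
Definition tout {Q : finType} (t : Q * Sigma * seq Gamma * Q) : seq Gamma := t.1.2.
Definition ttgt {Q : finType} (t : Q * Sigma * seq Gamma * Q) : Q := t.2.

Definition tedge {Q : finType} (T : transducer Q) : rel Q :=
  fun p q => has (fun t => (tsrc t == p) && (ttgt t == q)) (enum_fset (trans T)).

Definition treach {Q : finType} (T : transducer Q) : rel Q := connect (tedge T).

Definition trim {Q : finType} (T : transducer Q) : Prop :=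
  forall q : Q, exists i, exists f,
    [/\ i \in init T, f \in final T, treach T i q & treach T q f].

Fixpoint lcp2 (u v : seq Gamma) : seq Gamma :=
  match u, v with
  | x :: u', y :: v' => if x == y then x :: lcp2 u' v' else [::]
  | _, _ => [::]
  end.

Definition lcp (ws : seq (seq Gamma)) : seq Gamma :=
  match ws with
  | [::] => [::]
  | w :: ws' => foldl lcp2 w ws'
  end.

Section Det.
Variables (Q : finType) (T : transducer Q).

Definition dstate := {fset (Q * seq Gamma)}.

Definition Rset (U : dstate) (a : Sigma) : dstate :=
  seq_fset tt [seq (ttgt t, x.2 ++ tout t)
              | x <- enum_fset U,
                t <- [seq t <- enum_fset (trans T) | (tsrc t == x.1) && (tlet t == a)]].

Definition wout (U : dstate) (a : Sigma) : seq Gamma :=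
  lcp [seq x.2 | x <- enum_fset (Rset U a)].

Definition Pset (U : dstate) (a : Sigma) : dstate :=
  seq_fset tt [seq (x.1, drop (size (wout U a)) x.2)
              | x <- enum_fset (Rset U a) & prefix (wout U a) x.2].

Definition Dtrans (U : dstate) (a : Sigma) (v : seq Gamma) (U' : dstate) : Prop :=
  v = wout U a /\ U' = Pset U a.

Definition U0 : dstate := seq_fset tt [seq (q, [::]) | q <- enum (init T)].

Definition Dfinal (U : dstate) (w : seq Gamma) : Prop :=
  exists q, exists u, [/\ q \in final T, (q, u) \in U & w = u ++ fout T q].

Definition scc (q : Q) : {set Q} := [set q' | treach T q q' && treach T q' q].

Definition rank (U : dstate) : {set {set Q}} :=
  [set scc q' | q' in [set q' : Q | has (fun x => treach T x.1 q') (enum_fset U)]].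

Definition Wtrans (U : dstate) (a : Sigma) (v : seq Gamma) (U' : dstate) : Prop :=
  exists v0, exists P, Dtrans U a v0 P /\
    (if rank P \proper rank U
     then exists q, exists w, [/\ (q, w) \in P, v = v0 ++ w & U' = [fset (q, [::])]]
     else v = v0 /\ U' = P).

Definition Winit (U : dstate) : Prop := U = U0.

End Det.

Record multi_transducer := MultiTransducer {
  mstate : Type;
  minit  : mstate -> Prop;
  mtrans : mstate -> Sigma -> seq Gamma -> mstate -> Prop;
  mfinal : mstate -> seq Gamma -> Prop
}.

Inductive mreach (M : multi_transducer) : mstate M -> mstate M -> Prop :=
  | mreach_refl s : mreach s s
  | mreach_step s a v s1 s' : mtrans s a v s1 -> mreach s1 s' -> mreach s s'.

Definition transient (M : multi_transducer) (s : mstate M) (s' : mstate M) : Prop :=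
  ~ mreach s' s.

Definition separable (M : multi_transducer) : Prop :=
  (exists s0 : mstate M, forall s : mstate M, minit s <-> s = s0) /\
  forall (s : mstate M) a v1 (s1 : mstate M) v2 (s2 : mstate M),
    mtrans s a v1 s1 -> mtrans s a v2 s2 -> (v1, s1) <> (v2, s2) ->
    transient s s1 /\ transient s s2.

Definition Wbar (Q : finType) (T : transducer Q) : multi_transducer :=
  @MultiTransducer (dstate Q) (@Winit Q T) (@Wtrans Q T) (@Dfinal Q T).

End Transducers.

(* Every state occurring in the target of a transition of W-bar(T) is reachable
   in T from a state occurring in its source, so the rank n_U can only shrink
   along runs of W-bar(T).  From a given state and letter, W-bar(T) has a single
   transition unless the rank of P_{U,a} drops strictly, and then every target
   has a strictly smaller rank than U, so no run can lead back to U. *)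
From mathcomp Require Import all_boot.
From mathcomp Require Import finmap.

Set Implicit Arguments.
Unset Strict Implicit.
Unset Printing Implicit Defensive.

Local Open Scope fset_scope.

Section Rank.
Variables (Sigma Gamma Q : finType) (T : transducer Sigma Gamma Q).

Local Notation Wreach := (@mreach _ _ (Wbar T)).

Lemma rank_subset (U U' : dstate Gamma Q) :
  (forall y, y \in U' -> exists2 x, x \in U & treach T x.1 y.1) ->
  rank T U' \subset rank T U.
Proof.
move=> reachU'; apply/subsetP => _ /imsetP [q' + ->].
rewrite inE => /hasP [y /reachU' [x xU xy] yq'].
apply/imsetP; exists q' => //; rewrite inE; apply/hasP; exists x => //.
exact: connect_trans xy yq'.
Qed.

Lemma mem_Pset_reach (U : dstate Gamma Q) a y :
  y \in Pset T U a -> exists2 x, x \in U & treach T x.1 y.1.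
Proof.
rewrite seq_fsetE => /mapP [z]; rewrite mem_filter => /andP [_ + ->].
rewrite seq_fsetE => /allpairsPdep [x [t [xU + ->]]].
rewrite mem_filter => /andP [/andP [/eqP src_t _] tT].
exists x => //; apply: connect1; apply/hasP; exists t => //.
by rewrite src_t !eqxx.
Qed.

Lemma rank_Pset (U : dstate Gamma Q) a : rank T (Pset T U a) \subset rank T U.
Proof. exact/rank_subset/mem_Pset_reach. Qed.

Lemma rank_fset1_Pset (U : dstate Gamma Q) a q w :
  (q, w) \in Pset T U a -> rank T [fset (q, [::])] \subset rank T (Pset T U a).
Proof.
move=> qwP; apply: rank_subset => y; rewrite inE => /eqP ->.
by exists (q, w) => //; apply: connect0.
Qed.

Lemma Wtrans_rankP (U : dstate Gamma Q) a v U' :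
  Wtrans T U a v U' ->
  if rank T (Pset T U a) \proper rank T U then is_true (rank T U' \proper rank T U)
  else (v, U') = (wout T U a, Pset T U a).
Proof.
move=> [_ [_ [[-> ->]]]]; case: ifP => [drop_rank | _ [-> ->] //].
move=> [q [w [qwP _ ->]]].
exact: sub_proper_trans (rank_fset1_Pset qwP) drop_rank.
Qed.

Lemma Wtrans_rank (U : dstate Gamma Q) a v U' :
  Wtrans T U a v U' -> rank T U' \subset rank T U.
Proof.
move/Wtrans_rankP; case: ifP => [_ /proper_sub // | _ [_ ->]].
exact: rank_Pset.
Qed.

Lemma mreach_rank (U U' : dstate Gamma Q) :
  Wreach U U' -> rank T U' \subset rank T U.
Proof.
elim => [V | V a v V1 V' VV1 _ IH]; first exact: subxx.
exact: subset_trans IH (Wtrans_rank VV1).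
Qed.

Lemma transient_of_rank_proper (U U' : dstate Gamma Q) :
  rank T U' \proper rank T U -> @transient _ _ (Wbar T) U U'.
Proof.
move=> drop_rank /mreach_rank back.
by have := proper_sub_trans drop_rank back; rewrite properE subxx.
Qed.

End Rank.

Theorem lemma6 (Sigma Gamma Q : finType) (T : transducer Sigma Gamma Q) :
  trim T -> (exists i0 : Q, init T = [set i0]) ->
  separable (Wbar T).
Proof.
move=> _ _; split; first by exists (U0 T).
move=> U a v1 U1 v2 U2 /Wtrans_rankP tr1 /Wtrans_rankP tr2 neq.
case: ifP tr1 tr2 => _ tr1 tr2; last by rewrite tr1 tr2 in neq.
by split; apply: transient_of_rank_proper.
Qed.
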